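(* Let $(L,\vee,\wedge,0,1)$ be a complemented modular lattice with $0\neq1$, let $a\in L$ and let $A$ be a non-empty subset of $L$. Then $(a^+,\le)$, $(A^+,\le)$ and $(a^{++},\le)$ are antichains.
   Context: For $a\in L$, $a^+:=\{x\in L\mid a\vee x=1,\ a\wedge x=0\}$ (the set of all complements of $a$). For $A\subseteq L$, $A^+:=\{x\in L\mid a\vee x=1\text{ and }a\wedge x=0\text{ for all }a\in A\}$, and $a^{++}:=(a^+)^+$. *)

From HB Require Import structures.
From mathcomp Require Import all_boot all_order.
Set Implicit Arguments. Unset Strict Implicit. Unset Printing Implicit Defensive.
Import Order.TTheory.
Local Open Scope order_scope.

Definition modular_lattice (d : Order.disp_t) (L : tbLatticeType d) : Prop :=
  forall x y z : L, x <= z -> x `|` (y `&` z) = (x `|` y) `&` z.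

Definition complemented_lattice (d : Order.disp_t) (L : tbLatticeType d) : Prop :=
  forall a : L, exists x : L, a `|` x = \top /\ a `&` x = \bot.

Definition compl_set (d : Order.disp_t) (L : tbLatticeType d) (a : L) : L -> Prop :=
  fun x => a `|` x = \top /\ a `&` x = \bot.

Definition compl_setA (d : Order.disp_t) (L : tbLatticeType d) (A : L -> Prop) : L -> Prop :=
  fun x => forall a, A a -> a `|` x = \top /\ a `&` x = \bot.

Definition antichain (d : Order.disp_t) (L : tbLatticeType d) (S : L -> Prop) : Prop :=
  forall x y : L, S x -> S y -> x <= y -> x = y.

(* Two comparable complements x <= y of the same element b coincide: by modularity
   y = (x `|` b) `&` y = x `|` (b `&` y) = x.  Every A^+ with A
   non-empty lies inside some b^+, and a^+ is non-empty in a complemented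
   lattice, so a^{++} is of that form too. *)

From mathcomp Require Import all_boot all_order.
Local Open Scope order_scope.
Import Order.TTheory.

Section Complements.

Variables (d : Order.disp_t) (L : tbLatticeType d).

Lemma antichain_sub (S T : L -> Prop) :
  (forall x, S x -> T x) -> antichain T -> antichain S.
Proof. by move=> sST antiT x y Sx Sy; apply: antiT; apply: sST. Qed.

Lemma compl_setA_sub (A : L -> Prop) (b : L) :
  A b -> forall x, compl_setA A x -> compl_set b x.
Proof. by move=> Ab x /(_ b Ab). Qed.

Hypothesis Hmod : modular_lattice L.

Lemma compl_set_antichain (b : L) : antichain (compl_set b).
Proof.
move=> x y [bx_top _] [_ by_bot] le_xy.
by have := Hmod x b y le_xy; rewrite by_bot joinx0 joinC bx_top meet1x.
Qed.

Lemma compl_setA_antichain (A : L -> Prop) :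
  (exists b, A b) -> antichain (compl_setA A).
Proof.
case=> b Ab; apply: antichain_sub (compl_set_antichain b).
exact: compl_setA_sub.
Qed.

End Complements.

Theorem corollary1 (d : Order.disp_t) (L : tbLatticeType d)
  (Hmod : modular_lattice L) (Hcompl : complemented_lattice L)
  (H01 : (\bot : L) <> \top) (a : L) (A : L -> Prop) (HA : exists b, A b) :
  antichain (compl_set a) /\ antichain (compl_setA A)
  /\ antichain (compl_setA (compl_set a)).
Proof.
have [b a_b] := Hcompl a.
split; first exact: compl_set_antichain.
by split; apply: compl_setA_antichain => //; exists b.
Qed.
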